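(* Let $0=X_0<\dots<X_K=1$ be a mesh of $K\ge1$ elements, each carrying $p+1$ Gauss–Lobatto nodes ($p\ge1$), with $N+1=Kp+1$ global nodes, global unknown vector $\mathbf{U}=(\bar u_0,\dots,\bar u_N)^T$ and restriction matrices $R_e$. Let $a\ge0$ be constant and let $\varepsilon_j(t)\ge0$, $j=0,\dots,N$, be continuous global nodal diffusion coefficients; set $\mathcal{E}^e=\mathrm{diag}(R_e(\varepsilon_0,\dots,\varepsilon_N)^T)$. Define the assembled matrices $$\mathcal{P}=\sum_e R_e^T\mathcal{P}^eR_e,\quad \mathcal{Q}_x=\sum_eR_e^T\mathcal{Q}_x^eR_e,\quad \mathcal{A}=\sum_eR_e^T(\sqrt{\mathcal{E}^e}\mathcal{D}_x^e)^T\mathcal{P}^e(\sqrt{\mathcal{E}^e}\mathcal{D}_x^e)R_e,$$ and let $\delta_0:=(\mathcal{D}_x^1R_1\mathbf{U})_0$ and $\delta_N:=(\mathcal{D}_x^KR_K\mathbf{U})_p$ (the discrete derivatives at $x=0$ and $x=1$ from the first and last element). Let $\mathbf{U}(t)$ be a $C^1$ solution of $$\mathcal{P}\frac{d\mathbf{U}}{dt}+a\mathcal{Q}_x\mathbf{U}=-\mathcal{A}\mathbf{U}-\varepsilon_0\delta_0E_0+\varepsilon_N\delta_NE_N+\sigma_0E_0\big[a\bar u_0-\varepsilon_0\delta_0-g_0\big]+\sigma_NE_N\big[-\varepsilon_N\delta_N-g_N\big],$$ where $E_0,E_N$ are the first and last standard unit vectors of $\mathbb{R}^{N+1}$. If $\sigma_0=-1$,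 $\sigma_N=1$ and $g_0=g_N=0$, then for all $t\ge0$ $$\mathbf{U}(t)^T\mathcal{P}\mathbf{U}(t)+2\int_0^t\sum_{e=1}^K\big(\sqrt{\mathcal{E}^e}\mathcal{D}_x^eR_e\mathbf{U}\big)^T\mathcal{P}^e\big(\sqrt{\mathcal{E}^e}\mathcal{D}_x^eR_e\mathbf{U}\big)\,ds\le\mathbf{U}(0)^T\mathcal{P}\mathbf{U}(0).$$ That is, the energy stability of the single-element scheme is retained after continuous Galerkin merging of elements.
   Context: For element $e=[X_{e-1},X_e]$ with Gauss–Lobatto nodes $x^e_0<\dots<x^e_p$ (endpoints included), positive weights $w^e_k$ and degree-$p$ Lagrange basis $\ell^e_j$: $\mathcal{P}^e=\mathrm{diag}(w^e_0,\dots,w^e_p)$, $(\mathcal{Q}_x^e)_{ij}=\int_{X_{e-1}}^{X_e}\ell^e_i(\ell^e_j)'dx$, $\mathcal{D}_x^e=(\mathcal{P}^e)^{-1}\mathcal{Q}_x^e$. Global nodes are numbered left to right, local node $j$ of element $e$ is global node $(e-1)p+j$, and $R_e\in\mathbb{R}^{(p+1)\times(N+1)}$ is the Boolean matrix selecting those global entries. $\sqrt{\cdot}$ of a nonnegative diagonal matrix is taken entrywise. *)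

From HB Require Import structures.
From mathcomp Require Import all_boot all_order all_algebra.
From mathcomp Require Import all_classical all_reals all_analysis.
Unset Printing Implicit Defensive.
Import Order.TTheory GRing.Theory Num.Theory.
Import numFieldNormedType.Exports.
Local Open Scope ring_scope.
Local Open Scope classical_set_scope.

Definition lagrange (R : realType) (n : nat) (x : 'I_n.+1 -> R) (j : 'I_n.+1)
  : {poly R} :=
  \prod_(m < n.+1 | m != j) (('X - (x m)%:P) * ((x j - x m)^-1)%:P).

Definition pint (R : realType) (a b : R) (q : {poly R}) : R :=
  Rintegral (@lebesgue_measure R) `[a, b] (fun y => q.[y]).

(* (x, w) is the (n+1)-point Gauss-Lobatto rule on [a,b]: increasing nodes
   including both endpoints, positive weights, and exactness for all
   polynomials of degree <= 2n-1 (size <= 2n). *)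
Definition gauss_lobatto (R : realType) (n : nat) (a b : R)
  (x w : 'I_n.+1 -> R) : Prop :=
  [/\ x ord0 = a, x ord_max = b,
      (forall i j : 'I_n.+1, (i < j)%N -> x i < x j),
      (forall k, 0 < w k) &
      forall q : {poly R}, (size q <= 2 * n)%N ->
        \sum_(k < n.+1) w k * q.[x k] = pint R a b q].

(* Elements are numbered e = 0..K-1 (paper's e+1); element e is [X e, X (e+1)],
   with nodes xn e and weights w e. *)
Definition Pe (R : realType) (p : nat) (w : nat -> 'I_p.+1 -> R) (e : nat)
  : 'M[R]_p.+1 := diag_mx (\row_k w e k).

Definition Qe (R : realType) (p : nat) (X : nat -> R) (xn : nat -> 'I_p.+1 -> R)
  (e : nat) : 'M[R]_p.+1 :=
  \matrix_(i, j) pint R (X e) (X e.+1)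
     (lagrange R p (xn e) i * (lagrange R p (xn e) j)^`()).

Definition De (R : realType) (p : nat) (X : nat -> R) (xn w : nat -> 'I_p.+1 -> R)
  (e : nat) : 'M[R]_p.+1 := invmx (Pe R p w e) *m Qe R p X xn e.

Definition Restr (R : realType) (K p : nat) (e : nat) : 'M[R]_(p.+1, (K * p).+1) :=
  \matrix_(j, g) (((g : nat) == e * p + j)%N)%:R.

Definition sqrtE (R : realType) (K p : nat) (e : nat) (epsv : 'cV[R]_((K * p).+1))
  : 'M[R]_p.+1 := diag_mx (\row_j Num.sqrt ((Restr R K p e *m epsv) j 0)).

Definition Pg (R : realType) (K p : nat) (w : nat -> 'I_p.+1 -> R)
  : 'M[R]_((K * p).+1) :=
  \sum_(e < K) (Restr R K p e)^T *m Pe R p w e *m Restr R K p e.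

Definition Qg (R : realType) (K p : nat) (X : nat -> R) (xn : nat -> 'I_p.+1 -> R)
  : 'M[R]_((K * p).+1) :=
  \sum_(e < K) (Restr R K p e)^T *m Qe R p X xn e *m Restr R K p e.

Definition Ag (R : realType) (K p : nat) (X : nat -> R) (xn w : nat -> 'I_p.+1 -> R)
  (epsv : 'cV[R]_((K * p).+1)) : 'M[R]_((K * p).+1) :=
  \sum_(e < K) (Restr R K p e)^T *m (sqrtE R K p e epsv *m De R p X xn w e)^T
       *m Pe R p w e *m (sqrtE R K p e epsv *m De R p X xn w e) *m Restr R K p e.

Definition elem_diss (R : realType) (K p : nat) (X : nat -> R)
  (xn w : nat -> 'I_p.+1 -> R) (epsv U : 'cV[R]_((K * p).+1)) (e : nat) : R :=
  let v := sqrtE R K p e epsv *m De R p X xn w e *m Restr R K p e *m U in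
  (v^T *m Pe R p w e *m v) 0 0.

Definition E0 (R : realType) (N : nat) : 'cV[R]_N.+1 := \col_i ((i : nat) == 0%N)%:R.
Definition EN (R : realType) (N : nat) : 'cV[R]_N.+1 := \col_i ((i : nat) == N)%:R.

Definition colv (R : realType) (n : nat) (u : 'I_n -> R -> R) (t : R) : 'cV[R]_n :=
  \col_i u i t.
Definition dcolv (R : realType) (n : nat) (u : 'I_n -> R -> R) (t : R) : 'cV[R]_n :=
  \col_i (u i)^`() t.

From Pilot Require Import Defs.
From HB Require Import structures.
From mathcomp Require Import all_boot all_order all_algebra.
From mathcomp Require Import all_classical all_reals all_analysis.
From mathcomp Require Import ring lra zify.
Import Order.TTheory GRing.Theory Num.Theory.
Import numFieldNormedType.Exports.
Local Open Scope ring_scope.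
Local Open Scope classical_set_scope.

Set Implicit Arguments.
Unset Strict Implicit.

(* Gauss-Lobatto quadrature is exact for the degree 2p-1 products [l_i l_j'],
   so on every element [Q^e + (Q^e)^T = diag(-1,0,...,0,1)] (summation by parts).
   After continuous Galerkin assembly the contributions of the interior
   interfaces telescope and [U^T Q_x U = (u_N^2 - u_0^2)/2].  Testing the scheme
   against [U], the choice [sigma_0 = -1], [sigma_N = 1], [g = 0] makes the
   penalty terms cancel the boundary fluxes [eps delta], so that
   [d/dt (U^T P U) = - 2 U^T A U - a (u_0^2 + u_N^2) <= - 2 U^T A U];
   integrating in time gives the estimate. *)

Lemma size_deriv_leq (S : nzSemiRingType) (q : {poly S}) :
  (size (deriv q) <= (size q).-1)%N.
Proof.
have [->|nz] := eqVneq q 0; first by rewrite deriv0 size_poly0.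
by have := lt_size_deriv nz; case: (size q).
Qed.

Lemma size_mul_deriv_leq (S : nzSemiRingType) n (p q : {poly S}) :
  (size p <= n.+1)%N -> (size q <= n.+1)%N -> (size (p * deriv q)%R <= 2 * n)%N.
Proof.
move=> sp sq; have := size_deriv_leq q; have := size_polyMleq p (deriv q).
by rewrite -!subn1; lia.
Qed.

Lemma size_deriv_mul_leq (S : nzSemiRingType) n (p q : {poly S}) :
  (size p <= n.+1)%N -> (size q <= n.+1)%N -> (size (deriv (p * q)%R) <= 2 * n)%N.
Proof.
move=> sp sq; have := size_deriv_leq (p * q); have := size_polyMleq p q.
by rewrite -!subn1; lia.
Qed.

Section Quadrature.
Variable R : realType.

Lemma size_lagrange n (x : 'I_n.+1 -> R) (j : 'I_n.+1) :
  (size (Defs.lagrange R n x j) <= n.+1)%N.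
Proof.
have size_factor (m : 'I_n.+1) :
    (size (('X - (x m)%:P) * ((x j - x m)^-1)%:P)%R <= 2)%N.
  apply: leq_trans (size_polyMleq _ _) _; rewrite size_XsubC.
  by case: size (size_polyC_leq1 (x j - x m)^-1) => [|[|]].
apply: leq_trans (size_poly_prod_leq _ _) _.
have : (\sum_(m | m != j) size (('X - (x m)%:P) * ((x j - x m)^-1)%:P)%R
          <= \sum_(m | m != j) 2)%N by apply: leq_sum => m _; exact: size_factor.
by rewrite sum_nat_const cardC1 card_ord /=; set S := (\sum_(_ | _) _)%N; lia.
Qed.

Lemma horner_lagrange n (x : 'I_n.+1 -> R) (i k : 'I_n.+1) : injective x ->
  (Defs.lagrange R n x i).[x k] = (i == k)%:R.
Proof.
move=> x_inj; rewrite /Defs.lagrange horner_prod.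
have [<-|ik] := eqVneq i k.
  rewrite big1 // => m mi; rewrite !hornerE divff // subr_eq0.
  by apply: contra mi => /eqP/x_inj ->.
by rewrite (bigD1 k) 1?eq_sym //= !hornerE subrr !mul0r.
Qed.

Lemma pint_deriv (a b : R) (q : {poly R}) : a < b ->
  pint R a b q^`() = q.[b] - q.[a].
Proof.
move=> ab; rewrite /pint /Rintegral (continuous_FTC2 (F := horner q)) //=.
- by apply: continuous_subspaceT => y; exact: continuous_horner.
- split; first by move=> y _; exact: derivable_horner.
  + by apply: cvg_at_right_filter; exact: continuous_horner.
  + by apply: cvg_at_left_filter; exact: continuous_horner.
- by move=> y _; rewrite -derivE.
Qed.

Lemma gauss_lobatto_inj n (a b : R) (x w : 'I_n.+1 -> R) :
  gauss_lobatto R n a b x w -> injective x.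
Proof.
case=> _ _ x_mono _ _ i j xij.
by case: (ltngtP i j) => [/x_mono|/x_mono|/val_inj //]; rewrite xij ltxx.
Qed.

Lemma pint_lagrange_sbp n (a b : R) (x w : 'I_n.+1 -> R) (i j : 'I_n.+1) :
  gauss_lobatto R n a b x w -> a < b ->
  pint R a b (Defs.lagrange R n x i * (Defs.lagrange R n x j)^`())
  + pint R a b (Defs.lagrange R n x j * (Defs.lagrange R n x i)^`())
  = ((i == ord_max) && (j == ord_max))%:R - ((i == ord0) && (j == ord0))%:R.
Proof.
move=> gl ab; have x_inj := gauss_lobatto_inj gl.
case: gl => xa xb _ _ exact_rule.
have si := size_lagrange x i; have sj := size_lagrange x j.
rewrite -!exact_rule ?size_mul_deriv_leq // -big_split /=.
transitivity (\sum_(k < n.+1) w k * (Defs.lagrange R n x i * Defs.lagrange R n x j)^`().[x k]).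
  by apply: eq_bigr => k _; rewrite derivM hornerD !hornerM; ring.
rewrite exact_rule ?size_deriv_mul_leq //.
rewrite pint_deriv // -xa -xb !hornerM !horner_lagrange //.
by rewrite -!natrM !mulnb.
Qed.

End Quadrature.

Section QuadraticForms.
Variable T : comPzRingType.

Lemma sumr_mul_eqb n (F : 'I_n -> T) (m : 'I_n) :
  \sum_j F j * (j == m)%:R = F m.
Proof.
by rewrite (bigD1 m) //= eqxx mulr1 big1 ?addr0 // => j /negbTE ->; rewrite mulr0.
Qed.

Lemma quad_formE n (M : 'M[T]_n) (v : 'cV[T]_n) :
  (v^T *m M *m v) 0 0 = \sum_i \sum_j v i 0 * M i j * v j 0.
Proof.
rewrite mxE; under eq_bigr do rewrite mxE big_distrl /=.
rewrite exchange_big /=; apply: eq_bigr => i _; apply: eq_bigr => j _.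
by rewrite !mxE.
Qed.

Lemma quad_formD n (M N : 'M[T]_n) (v : 'cV[T]_n) :
  (v^T *m (M + N) *m v) 0 0 = (v^T *m M *m v) 0 0 + (v^T *m N *m v) 0 0.
Proof. by rewrite mulmxDr mulmxDl mxE. Qed.

Lemma quad_formB n (M N : 'M[T]_n) (v : 'cV[T]_n) :
  (v^T *m (M - N) *m v) 0 0 = (v^T *m M *m v) 0 0 - (v^T *m N *m v) 0 0.
Proof. by rewrite quad_formD mulmxN mulNmx; congr (_ + _); rewrite mxE. Qed.

Lemma quad_form_sum n K (F : 'I_K -> 'M[T]_n) (v : 'cV[T]_n) :
  (v^T *m (\sum_(e < K) F e) *m v) 0 0 = \sum_(e < K) (v^T *m F e *m v) 0 0.
Proof. by rewrite mulmx_sumr mulmx_suml summxE. Qed.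

Lemma quad_form_mulmx m n (M : 'M[T]_m) (A : 'M[T]_(m, n)) (v : 'cV[T]_n) :
  v^T *m (A^T *m M *m A) *m v = (A *m v)^T *m M *m (A *m v).
Proof. by rewrite trmx_mul !mulmxA. Qed.

Lemma quad_form_delta n (v : 'cV[T]_n) (i : 'I_n) :
  (v^T *m delta_mx i i *m v) 0 0 = v i 0 ^+ 2.
Proof.
rewrite quad_formE (bigD1 i) //= (bigD1 i) //= mxE !eqxx mulr1 -expr2.
rewrite big1 => [|k ki]; last by rewrite mxE eqxx (negbTE ki) mulr0 mul0r.
rewrite big1 ?addr0 // => k ki.
by rewrite big1 // => l _; rewrite mxE (negbTE ki) mulr0 mul0r.
Qed.

Lemma bilin_form_tr n (M : 'M[T]_n) (u v : 'cV[T]_n) :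
  (v^T *m M^T *m u) 0 0 = (u^T *m M *m v) 0 0.
Proof.
transitivity ((v^T *m M^T *m u)^T 0 0); first by rewrite [RHS]mxE.
by rewrite !trmx_mul !trmxK mulmxA.
Qed.

End QuadraticForms.

Section Assembly.
Variable R : realType.

Lemma tr_mulmx_E0 N (U : 'cV[R]_N.+1) : (U^T *m E0 R N) 0 0 = U ord0 0.
Proof.
rewrite mxE -(sumr_mul_eqb (fun i => U i 0) ord0).
by apply: eq_bigr => i _; rewrite !mxE.
Qed.

Lemma tr_mulmx_EN N (U : 'cV[R]_N.+1) : (U^T *m EN R N) 0 0 = U ord_max 0.
Proof.
rewrite mxE -(sumr_mul_eqb (fun i => U i 0) ord_max).
by apply: eq_bigr => i _; rewrite !mxE.
Qed.

Lemma Restr_mulmx K p e (U : 'cV[R]_((K * p).+1)) (j : 'I_p.+1) : (e < K)%N ->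
  (Restr R K p e *m U) j 0 = U (inord (e * p + j)) 0.
Proof.
move=> eK; have epj : (e * p + j < (K * p).+1)%N by have := ltn_ord j; nia.
rewrite mxE -(sumr_mul_eqb (fun g => U g 0) (inord (e * p + j))).
apply: eq_bigr => g _; rewrite !mxE mulrC.
by rewrite -(inj_eq val_inj) /= inordK.
Qed.

Lemma Qe_sbp p (X : nat -> R) (xn w : nat -> 'I_p.+1 -> R) e :
  gauss_lobatto R p (X e) (X e.+1) (xn e) (w e) -> X e < X e.+1 ->
  Qe R p X xn e + (Qe R p X xn e)^T = delta_mx ord_max ord_max - delta_mx ord0 ord0.
Proof.
by move=> gl lt; apply/matrixP => i j; rewrite !mxE (pint_lagrange_sbp _ _ gl lt).
Qed.

Lemma quad_form_Qe p (X : nat -> R) (xn w : nat -> 'I_p.+1 -> R) e (v : 'cV[R]_p.+1) :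
  gauss_lobatto R p (X e) (X e.+1) (xn e) (w e) -> X e < X e.+1 ->
  (v^T *m Qe R p X xn e *m v) 0 0 = (v ord_max 0 ^+ 2 - v ord0 0 ^+ 2) / 2.
Proof.
move=> gl lt.
have two_q : 2 * (v^T *m Qe R p X xn e *m v) 0 0 = v ord_max 0 ^+ 2 - v ord0 0 ^+ 2.
  rewrite mulr2n mulrDl mul1r -{2}[in LHS]bilin_form_tr -quad_formD (Qe_sbp gl lt).
  by rewrite quad_formB !quad_form_delta.
by rewrite -two_q mulrAC divff ?mul1r // pnatr_eq0.
Qed.

Lemma quad_form_Qg K p (X : nat -> R) (xn w : nat -> 'I_p.+1 -> R)
    (U : 'cV[R]_((K * p).+1)) :
  (forall e, (e < K)%N -> X e < X e.+1) ->
  (forall e, (e < K)%N -> gauss_lobatto R p (X e) (X e.+1) (xn e) (w e)) ->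
  (U^T *m Qg R K p X xn *m U) 0 0 = (U ord_max 0 ^+ 2 - U ord0 0 ^+ 2) / 2.
Proof.
move=> X_lt gl; rewrite /Qg quad_form_sum.
pose node_sq k := U (inord (k * p)) 0 ^+ 2.
transitivity (\sum_(e < K) (node_sq e.+1 - node_sq e) / 2).
  apply: eq_bigr => e _; rewrite quad_form_mulmx.
  rewrite (quad_form_Qe _ (gl _ (ltn_ord e)) (X_lt _ (ltn_ord e))).
  by rewrite !Restr_mulmx // /node_sq /= addn0 mulSn addnC.
rewrite -mulr_suml -(big_mkord xpredT (fun e => node_sq e.+1 - node_sq e)).
rewrite telescope_sumr // /node_sq mul0n.
by congr ((U _ 0 ^+ 2 - U _ 0 ^+ 2) / 2); apply: val_inj; rewrite /= inordK.
Qed.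

Lemma quad_form_Ag K p (X : nat -> R) (xn w : nat -> 'I_p.+1 -> R)
    (epsv U : 'cV[R]_((K * p).+1)) :
  (U^T *m Ag R K p X xn w epsv *m U) 0 0 = \sum_(e < K) elem_diss R K p X xn w epsv U e.
Proof.
by rewrite /Ag quad_form_sum; apply: eq_bigr => e _; rewrite /elem_diss !trmx_mul !mulmxA.
Qed.

Lemma tr_Pg K p (w : nat -> 'I_p.+1 -> R) : (Pg R K p w)^T = Pg R K p w.
Proof.
rewrite /Pg linear_sum; apply: eq_bigr => e _.
by rewrite /= !trmx_mul trmxK /Pe tr_diag_mx mulmxA.
Qed.

Lemma energy_rate K p (X : nat -> R) (xn w : nat -> 'I_p.+1 -> R) (a : R)
    (epsv U V : 'cV[R]_((K * p).+1)) (u0 eps0 delta0 epsN deltaN : R) :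
  (forall e, (e < K)%N -> X e < X e.+1) ->
  (forall e, (e < K)%N -> gauss_lobatto R p (X e) (X e.+1) (xn e) (w e)) ->
  u0 = U ord0 0 ->
  Pg R K p w *m V + a *: (Qg R K p X xn *m U) =
      - (Ag R K p X xn w epsv *m U) - (eps0 * delta0) *: E0 R (K * p)
      + (epsN * deltaN) *: EN R (K * p)
      + (-1 * (a * u0 - eps0 * delta0 - 0)) *: E0 R (K * p)
      + (1 * (- (epsN * deltaN) - 0)) *: EN R (K * p) ->
  2 * (U^T *m Pg R K p w *m V) 0 0 =
    - 2 * (\sum_(e < K) elem_diss R K p X xn w epsv U e)
    - a * (U ord0 0 ^+ 2 + U ord_max 0 ^+ 2).
Proof.
move=> X_lt gl -> /(congr1 (fun M => (U^T *m M) 0 0)) /=.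
rewrite !mulmxDr !mulmxN -!scalemxAr !mulmxA.
move: (quad_form_Qg U X_lt gl) (quad_form_Ag X xn w epsv U).
move: (tr_mulmx_E0 U) (tr_mulmx_EN U).
set PV := U^T *m _ *m V; set QU := U^T *m _ *m U; set AU := U^T *m Ag _ _ _ _ _ _ _ *m U.
set U0 := U^T *m E0 R _; set UN := U^T *m EN R _.
clearbody PV QU AU U0 UN; rewrite !mxE => -> -> -> ->.
lra.
Qed.

End Assembly.

Section WithinContinuity.
Variables (R : realType) (A : set R).

Lemma within_continuous_cst (c : R) : {within A, continuous (fun _ => c)}.
Proof. exact/continuous_subspaceT/cst_continuous. Qed.

Lemma within_continuousM (f g : R -> R) :
  {within A, continuous f} -> {within A, continuous g} ->
  {within A, continuous (fun s => f s * g s)}.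
Proof. by move=> cf cg x; apply: continuousM; [exact: cf | exact: cg]. Qed.

Lemma within_continuous_sum n (F : 'I_n -> R -> R) :
  (forall i, {within A, continuous (F i)}) ->
  {within A, continuous (fun s => \sum_i F i s)}.
Proof.
elim: n F => [|n IHn] F cF.
  by under eq_fun do rewrite big_ord0; exact: within_continuous_cst.
under eq_fun do rewrite big_ord_recr /=.
exact: (within_continuousD (IHn _ (fun i => cF _)) (cF _)).
Qed.

Lemma within_continuous_sqrt (f : R -> R) :
  {within A, continuous f} -> {within A, continuous (fun s => Num.sqrt (f s))}.
Proof. by move=> cf x; apply: (continuous_comp (cf x)); exact: sqrt_continuous. Qed.

Definition mx_within_continuous m n (F : R -> 'M[R]_(m, n)) :=
  forall i j, {within A, continuous (fun s => F s i j)}.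

Lemma mx_within_continuous_cst m n (M : 'M[R]_(m, n)) :
  mx_within_continuous (fun _ => M).
Proof. by move=> i j; exact: within_continuous_cst. Qed.

Lemma mx_within_continuous_mul m n k (F : R -> 'M[R]_(m, n)) (G : R -> 'M[R]_(n, k)) :
  mx_within_continuous F -> mx_within_continuous G ->
  mx_within_continuous (fun s => F s *m G s).
Proof.
move=> cF cG i j; under eq_fun do rewrite mxE.
by apply: within_continuous_sum => l; apply: within_continuousM.
Qed.

Lemma mx_within_continuous_tr m n (F : R -> 'M[R]_(m, n)) :
  mx_within_continuous F -> mx_within_continuous (fun s => (F s)^T).
Proof. by move=> cF i j; under eq_fun do rewrite mxE; exact: cF. Qed.

Lemma mx_within_continuous_diag n (F : R -> 'rV[R]_n) :
  mx_within_continuous F -> mx_within_continuous (fun s => diag_mx (F s)).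
Proof.
move=> cF i j; under eq_fun do rewrite mxE.
case: (i == j); under eq_fun do rewrite ?mulr1n ?mulr0n.
  exact: cF.
exact: within_continuous_cst.
Qed.

Lemma mx_within_continuous_row n (f : 'I_n -> R -> R) :
  (forall j, {within A, continuous (f j)}) -> mx_within_continuous (fun s => \row_j f j s).
Proof. by move=> cf i j; under eq_fun do rewrite mxE; exact: cf. Qed.

Lemma mx_within_continuous_colv n (u : 'I_n -> R -> R) :
  (forall i, {within A, continuous (u i)}) -> mx_within_continuous (colv R n u).
Proof. by move=> cu i j; under eq_fun do rewrite mxE; exact: cu. Qed.

Lemma within_continuous_quad_form n (M : 'M[R]_n) (F : R -> 'cV[R]_n) :
  mx_within_continuous F -> {within A, continuous (fun s => ((F s)^T *m M *m F s) 0 0)}.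
Proof.
move=> cF; have cFt := mx_within_continuous_tr cF.
have := mx_within_continuous_mul (mx_within_continuous_mul cFt
          (mx_within_continuous_cst (M := M))) cF.
by move=> /(_ 0 0).
Qed.

Lemma within_continuous_elem_diss K p (X : nat -> R) (xn w : nat -> 'I_p.+1 -> R)
    (eps u : 'I_((K * p).+1) -> R -> R) e :
  (forall j, {within A, continuous (eps j)}) -> (forall i, {within A, continuous (u i)}) ->
  {within A, continuous (fun s =>
     elem_diss R K p X xn w (colv R (K * p).+1 eps s) (colv R (K * p).+1 u s) e)}.
Proof.
move=> ceps cu; apply: within_continuous_quad_form.
have cRe : mx_within_continuous (fun s => Restr R K p e *m colv R (K * p).+1 eps s).
  exact: mx_within_continuous_mul (mx_within_continuous_cst (M := Restr R K p e))
    (mx_within_continuous_colv ceps).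
have cS : mx_within_continuous (fun s => sqrtE R K p e (colv R (K * p).+1 eps s)).
  apply: mx_within_continuous_diag; apply: mx_within_continuous_row => j.
  by apply: within_continuous_sqrt; move: cRe => /(_ j 0).
exact: mx_within_continuous_mul (mx_within_continuous_mul (mx_within_continuous_mul cS
  (mx_within_continuous_cst (M := De R p X xn w e)))
  (mx_within_continuous_cst (M := Restr R K p e))) (mx_within_continuous_colv cu).
Qed.

End WithinContinuity.

Section MatrixDerivative.
Variable R : realType.

Definition mx_is_derive (x : R) m n (F : R -> 'M[R]_(m, n)) (F' : 'M[R]_(m, n)) :=
  forall i j, is_derive x 1 (fun s => F s i j) (F' i j).

Lemma mx_is_derive_cst x m n (M : 'M[R]_(m, n)) : mx_is_derive x (fun _ => M) 0.
Proof. by move=> i j; rewrite mxE; exact: is_derive_cst. Qed.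

Lemma mx_is_derive_mul x m n k (F : R -> 'M[R]_(m, n)) (G : R -> 'M[R]_(n, k)) F' G' :
  mx_is_derive x F F' -> mx_is_derive x G G' ->
  mx_is_derive x (fun s => F s *m G s) (F' *m G x + F x *m G').
Proof.
move=> dF dG i j.
have -> : (fun s => (F s *m G s) i j) = \sum_l (fun s => F s i l * G s l j).
  by rewrite fct_sumE; apply/funext => s; rewrite mxE.
apply: is_derive_eq.
  by apply: is_derive_sum => l; exact: is_deriveM.
rewrite !mxE -big_split /=; apply: eq_bigr => l _.
by rewrite /GRing.scale /=; ring.
Qed.

Lemma mx_is_derive_tr x m n (F : R -> 'M[R]_(m, n)) F' :
  mx_is_derive x F F' -> mx_is_derive x (fun s => (F s)^T) F'^T.
Proof. by move=> dF i j; rewrite mxE; under eq_fun do rewrite mxE; exact: dF. Qed.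

Lemma mx_is_derive_colv x n (u : 'I_n -> R -> R) : (forall i, derivable (u i) x 1) ->
  mx_is_derive x (colv R n u) (dcolv R n u x).
Proof.
move=> du i j; rewrite mxE; under eq_fun do rewrite mxE.
by rewrite derive1E; exact: derivableP.
Qed.

Lemma is_derive_quad_form x n (M : 'M[R]_n) (u : 'I_n -> R -> R) : M^T = M ->
  (forall i, derivable (u i) x 1) ->
  is_derive x 1 (fun s => ((colv R n u s)^T *m M *m colv R n u s) 0 0)
    (2 * ((colv R n u x)^T *m M *m dcolv R n u x) 0 0).
Proof.
move=> M_sym du; have dU := mx_is_derive_colv du.
have := mx_is_derive_mul (mx_is_derive_mul (mx_is_derive_tr dU) (mx_is_derive_cst x M)) dU.
move=> /(_ 0 0) /is_derive_eq; apply.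
rewrite mulmx0 addr0 mxE -{1}M_sym bilin_form_tr.
by rewrite mulr_natl mulr2n.
Qed.

End MatrixDerivative.

Section EnergyDecay.
Variable R : realType.
Local Notation mu := (@lebesgue_measure R).

Lemma Rintegral_derive (F f : R -> R) (a b : R) : a < b ->
  {within `[a, b], continuous f} -> {within `[a, b], continuous F} ->
  (forall x, a < x < b -> is_derive x 1 F (f x)) ->
  Rintegral mu `[a, b] f = F b - F a.
Proof.
move=> ab cf cF dF; have [_ Fa Fb] := (continuous_within_itvP _ ab).1 cF.
rewrite /Rintegral (continuous_FTC2 (F := F) ab cf) //.
  by split=> // x; rewrite in_itv /= => /dF [].
by move=> x; rewrite in_itv /= => /dF dFx; rewrite derive1E derive_val.
Qed.

Lemma energy_dissipation_le (E f g : R -> R) (k t : R) : 0 <= t ->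
  {within [set x : R | 0 <= x], continuous E} ->
  {within [set x : R | 0 <= x], continuous f} ->
  {within [set x : R | 0 <= x], continuous g} ->
  (forall s : R, 0 < s -> is_derive s 1 E (- (k * f s + g s))) ->
  (forall s : R, 0 <= s -> 0 <= g s) ->
  E t + k * Rintegral mu `[0, t] f <= E 0.
Proof.
move=> t_ge0 cE cf cg dE g_ge0.
move: t_ge0; rewrite le_eqVlt => /predU1P[<-|t_gt0].
  by rewrite set_itv1 Rintegral_set1 mulr0 addr0.
have sub : `[0, t] `<=` [set x : R | 0 <= x] by move=> x /=; rewrite in_itv /= => /andP[].
have int h : {within [set x : R | 0 <= x], continuous h} -> mu.-integrable `[0, t] (EFin \o h).
  move=> ch; apply: continuous_compact_integrable; first exact: segment_compact.
  exact: continuous_subspaceW sub ch.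
have ckf : {within [set x : R | 0 <= x], continuous (fun s => k * f s)}.
  by apply: within_continuousM => //; exact: within_continuous_cst.
have ftc : Rintegral mu `[0, t] (fun s => k * f s + g s) = - E t - - E 0.
  apply: (@Rintegral_derive (fun s => - E s)) => //.
  - exact: continuous_subspaceW sub (within_continuousD ckf cg).
  - exact: continuous_subspaceW sub (fun x => continuousN (cE x)).
  - move=> x /andP[x_gt0 _]; apply: is_derive_eq; first exact: is_deriveN (dE _ x_gt0).
    by rewrite opprK.
rewrite RintegralD ?RintegralZl ?int // in ftc.
have : 0 <= Rintegral mu `[0, t] g.
  by apply: Rintegral_ge0 => x; rewrite /= in_itv /= => /andP[x_ge0 _]; exact: g_ge0.
lra.
Qed.

End EnergyDecay.

Theorem proposition4 (R : realType) (K p : nat) (X : nat -> R)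
  (xn w : nat -> 'I_p.+1 -> R) (a : R)
  (eps u : 'I_((K * p).+1) -> R -> R)
  (sigma0 sigmaN g0 gN : R) :
  (0 < K)%N -> (0 < p)%N ->
  X 0%N = 0 -> X K = 1 -> (forall e : nat, (e < K)%N -> X e < X e.+1) ->
  (forall e : nat, (e < K)%N -> gauss_lobatto R p (X e) (X e.+1) (xn e) (w e)) ->
  0 <= a ->
  (forall j t, 0 <= t -> 0 <= eps j t) ->
  (forall j, {within [set x : R | 0 <= x], continuous (eps j)}) ->
  (forall i, {within [set x : R | 0 <= x], continuous (u i)}) ->
  (forall i t, 0 < t -> derivable (u i) t 1) ->
  (forall i t, 0 < t -> {for t, continuous (u i)^`()}) ->
  (forall t, 0 < t ->
    let U := colv R (K * p).+1 u t in
    let epsv := colv R (K * p).+1 eps t in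
    let eps0 := eps ord0 t in
    let epsN := eps ord_max t in
    let delta0 := (De R p X xn w 0 *m Restr R K p 0 *m U) ord0 0 in
    let deltaN := (De R p X xn w K.-1 *m Restr R K p K.-1 *m U) ord_max 0 in
    Pg R K p w *m dcolv R (K * p).+1 u t + a *: (Qg R K p X xn *m U) =
      - (Ag R K p X xn w epsv *m U) - (eps0 * delta0) *: E0 R (K * p)
      + (epsN * deltaN) *: EN R (K * p)
      + (sigma0 * (a * u ord0 t - eps0 * delta0 - g0)) *: E0 R (K * p)
      + (sigmaN * (- (epsN * deltaN) - gN)) *: EN R (K * p)) ->
  sigma0 = -1 -> sigmaN = 1 -> g0 = 0 -> gN = 0 ->
  forall t, 0 <= t ->
    ((colv R (K * p).+1 u t)^T *m Pg R K p w *m colv R (K * p).+1 u t) 0 0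
    + 2 * Rintegral (@lebesgue_measure R) `[0, t]
            (fun s => \sum_(e < K) elem_diss R K p X xn w (colv R (K * p).+1 eps s) (colv R (K * p).+1 u s) e)
    <= ((colv R (K * p).+1 u 0)^T *m Pg R K p w *m colv R (K * p).+1 u 0) 0 0.
Proof.
move=> _ _ _ _ X_lt gl a_ge0 _ ceps cu du _ scheme s0 sN g0e gNe t t_ge0.
subst sigma0 sigmaN g0 gN.
pose U := colv R (K * p).+1 u; pose epsv := colv R (K * p).+1 eps.
apply: (@energy_dissipation_le _ (fun s => ((U s)^T *m Pg R K p w *m U s) 0 0)
  (fun s => \sum_(e < K) elem_diss R K p X xn w (epsv s) (U s) e)
  (fun s => a * (u ord0 s ^+ 2 + u ord_max s ^+ 2))) => //.
- exact: within_continuous_quad_form (mx_within_continuous_colv cu).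
- by apply: within_continuous_sum => e; exact: within_continuous_elem_diss.
- apply: within_continuousM; first exact: within_continuous_cst.
  by apply: within_continuousD; apply: within_continuousM.
- move=> s s_gt0; have du_s i := du i s s_gt0.
  apply: is_derive_eq; first exact: is_derive_quad_form (tr_Pg K w) du_s.
  rewrite (energy_rate X_lt gl _ (scheme s s_gt0)); last by rewrite mxE.
  by rewrite !mxE; ring.
- by move=> s _; rewrite mulr_ge0 // addr_ge0 // sqr_ge0.
Qed.
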